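(* Let $H$ be a real Hilbert space, $A$ a strictly positive selfadjoint operator on $H$ with $\lambda_1>0$ the minimum of its spectrum, $\alpha,\beta,\gamma>0$ with $\mu=\gamma-\alpha\beta\ge0$, $\eta\in\mathbb R$, $\rho>0$, and assume $$\eta^2>\frac{\mu}{\alpha\lambda_1}\qquad\text{and}\qquad\rho>\frac{2\mu\lambda_1}{\alpha\eta^2\lambda_1-\mu}.$$ For $(u,v,w,\theta)\in\mathcal H=H^1\times H^1\times H\times H$ and $\varepsilon>0$ define $$\mathsf L=\frac{\gamma}{\alpha}\|v+\alpha u\|_1^2+\|w+\alpha v\|^2-\frac{\mu}{\alpha}\|v\|_1^2+\|\theta\|^2+\rho\Big(\eta\langle\theta,v\rangle+\frac{\eta^2}{2}\|v\|_1^2+\frac12\|\theta\|_{-1}^2\Big)-\varepsilon^2\langle v-\alpha u,w+\alpha v\rangle,$$ $$\mathcal E=\frac12\big[\|v+\alpha u\|_1^2+\|w+\alpha v\|^2+\|v\|_1^2+\|\theta\|^2\big].$$ Then there exists $c>1$ such that $\frac1c\mathcal E\le\mathsf L\le c\,\mathcal E$ on $\mathcal H$ for every $\varepsilon>0$ small enough.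
   Context: $H^\sigma=\mathcal D(A^{\sigma/2})$ with $\|u\|_\sigma=\|A^{\sigma/2}u\|$ (for $\sigma<0$, the completion); $\langle\cdot,\cdot\rangle,\|\cdot\|$ are the inner product and norm of $H$. *)

From HB Require Import structures.
From mathcomp Require Import all_boot all_order all_algebra.
From mathcomp Require Import boolp classical_sets reals.
Set Implicit Arguments. Unset Strict Implicit. Unset Printing Implicit Defensive.
Import Order.TTheory GRing.Theory Num.Theory.
Local Open Scope ring_scope.
Local Open Scope classical_set_scope.

Section Hilbert.
Variables (R : realType) (V : lmodType R) (ip : V -> V -> R).

Definition hnorm (x : V) : R := Num.sqrt (ip x x).

Definition is_real_hilbert : Prop :=
  [/\ (forall x y, ip x y = ip y x),
      (forall (a : R) x y z, ip (a *: x + y) z = a * ip x z + ip y z),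
      (forall x, 0 <= ip x x),
      (forall x, ip x x = 0 -> x = 0) &
      (forall u : nat -> V,
         (forall e : R, 0 < e -> exists N, forall m n, (N <= m)%N -> (N <= n)%N ->
             hnorm (u m - u n) < e) ->
         exists l, forall e : R, 0 < e -> exists N, forall n, (N <= n)%N ->
             hnorm (u n - l) < e)].

(* (possibly unbounded) operators: a domain D and a map T defined on it *)
Definition subspace (D : set V) : Prop :=
  D 0 /\ forall (a : R) x y, D x -> D y -> D (a *: x + y).

Definition linear_on (D : set V) (T : V -> V) : Prop :=
  forall (a : R) x y, D x -> D y -> T (a *: x + y) = a *: T x + T y.

Definition dense (D : set V) : Prop :=
  forall x (e : R), 0 < e -> exists y, D y /\ hnorm (x - y) < e.

(* T = T^* : densely defined linear, and (v, z) is in the graph of the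
   adjoint iff it is in the graph of T *)
Definition selfadjoint (D : set V) (T : V -> V) : Prop :=
  [/\ subspace D, linear_on D T, dense D &
      forall v z, (forall u, D u -> ip (T u) v = ip u z) <-> (D v /\ T v = z)].

Definition strictly_positive (D : set V) (T : V -> V) : Prop :=
  forall u, D u -> u <> 0 -> 0 < ip (T u) u.

Definition resolvent (D : set V) (T : V -> V) (l : R) : Prop :=
  (forall f, exists x, D x /\ T x - l *: x = f) /\
  (forall x y, D x -> D y -> T x - l *: x = T y - l *: y -> x = y) /\
  exists C : R, forall x, D x -> hnorm x <= C * hnorm (T x - l *: x).

(* (real) spectrum; for a selfadjoint T the whole spectrum is real *)
Definition spectrum (D : set V) (T : V -> V) : set R :=
  [set l | ~ resolvent D T l].

Definition spectrum_min (D : set V) (T : V -> V) (l1 : R) : Prop :=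
  spectrum D T l1 /\ forall l, spectrum D T l -> l1 <= l.

Definition is_sqrt_op (D : set V) (A : V -> V) (DB : set V) (B : V -> V) : Prop :=
  [/\ selfadjoint DB B,
      (forall u, DB u -> 0 <= ip (B u) u),
      (forall x, D x <-> (DB x /\ DB (B x))) &
      (forall x, D x -> A x = B (B x))].

(* ||x||_1 = ||A^{1/2} x|| for x in H^1 = D(A^{1/2}) *)
Definition norm1 (B : V -> V) (x : V) : R := hnorm (B x).

(* ||th||_{-1} = ||A^{-1/2} th||, A^{-1/2} th being the x in D(A^{1/2}) with
   A^{1/2} x = th *)
Definition normm1 (DB : set V) (B : V -> V) (th : V) : R :=
  hnorm (xget 0 [set x | DB x /\ B x = th]).

Definition Lfun (B : V -> V) (DB : set V) (alpha gamma mu eta rho eps : R)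
  (u v w th : V) : R :=
  gamma / alpha * norm1 B (v + alpha *: u) ^+ 2 + hnorm (w + alpha *: v) ^+ 2
  - mu / alpha * norm1 B v ^+ 2 + hnorm th ^+ 2
  + rho * (eta * ip th v + eta ^+ 2 / 2 * norm1 B v ^+ 2
           + 1 / 2 * normm1 DB B th ^+ 2)
  - eps ^+ 2 * ip (v - alpha *: u) (w + alpha *: v).

Definition Efun (B : V -> V) (alpha : R) (u v w th : V) : R :=
  1 / 2 * (norm1 B (v + alpha *: u) ^+ 2 + hnorm (w + alpha *: v) ^+ 2
           + norm1 B v ^+ 2 + hnorm th ^+ 2).
End Hilbert.

(* For eps = 0 the functional L consists of the terms in |v + alpha u|_1 and
   |w + alpha v|, which already appear in E, and of the (v, theta)-part
     - mu/alpha |v|_1^2 + |theta|^2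
       + rho (eta <theta, v> + eta^2/2 |v|_1^2 + 1/2 |theta|_{-1}^2).
   Since <theta, v> = <A^{-1/2} theta, A^{1/2} v>, a weighted Young inequality
   and the Poincare inequality l1 |x|^2 <= |x|_1^2 bound this part below by a
   multiple of |v|_1^2 + |theta|^2; the hypotheses on eta and rho say exactly
   that a weight making both coefficients positive exists.  The remaining term
   eps^2 <v - alpha u, w + alpha v> is bounded by a multiple of E, again by
   Poincare, so it is harmless for small eps.  Poincare itself holds because
   l1, the bottom of the spectrum of the selfadjoint A, is also the bottom of
   its numerical range. *)

From HB Require Import structures.
From mathcomp Require Import all_boot all_order all_algebra.
From mathcomp Require Import boolp classical_sets reals.
From mathcomp Require Import lra ring.
Import Order.TTheory GRing.Theory Num.Theory.
Local Open Scope ring_scope.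
Local Open Scope classical_set_scope.
Set Implicit Arguments. Unset Strict Implicit.

Section RealInequalities.
Variable R : realFieldType.

Lemma quadratic_ge0_discr (P Q S : R) :
  (forall t, 0 <= P + 2 * t * Q + t ^+ 2 * S) -> 0 <= S -> Q ^+ 2 <= P * S.
Proof.
move=> Hq S_ge0; have [S_gt0|] := ltP 0 S.
  have := Hq (- Q / S).
  have -> : P + 2 * (- Q / S) * Q + (- Q / S) ^+ 2 * S = (P * S - Q ^+ 2) / S.
    by field; rewrite gt_eqF.
  by rewrite pmulr_lge0 ?invr_gt0 // subr_ge0.
move=> S_le0; have S0 : S = 0 by apply/eqP; rewrite eq_le S_le0 S_ge0.
rewrite {}S0 in Hq *; have [->|Q_neq0] := eqVneq Q 0; first by rewrite expr0n mulr0.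
have := Hq (- (P + 1) / (2 * Q)); rewrite mulr0 addr0.
have -> : 2 * (- (P + 1) / (2 * Q)) * Q = - (P + 1) by field; rewrite Q_neq0.
lra.
Qed.

Lemma young_of_sqr_le (x y c s : R) :
  0 <= x -> 0 <= y -> 0 < s -> c ^+ 2 <= x * y -> 2 * c <= s * x + y / s.
Proof.
move=> x_ge0 y_ge0 s_gt0 cxy.
have sx_ge0 : 0 <= s * x by rewrite mulr_ge0 // ltW.
have ys_ge0 : 0 <= y / s by rewrite divr_ge0 // ltW.
have xy : x * y = (s * x) * (y / s) by field; rewrite gt_eqF.
move: cxy sx_ge0 ys_ge0; rewrite xy; move: (s * x) (y / s) => a b cab a_ge0 b_ge0.
have : (2 * c) ^+ 2 <= (a + b) ^+ 2 by have := sqr_ge0 (a - b); nra.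
nra.
Qed.

Lemma perturbation_equiv (k K M : R) : 0 < k -> 0 <= K -> 0 <= M ->
  exists c, 1 < c /\ exists eps0, 0 < eps0 /\
    forall eps, 0 < eps -> eps < eps0 -> forall E P X, 0 <= E ->
      k * E <= P -> P <= K * E -> `|X| <= M * E ->
      E / c <= P - eps ^+ 2 * X /\ P - eps ^+ 2 * X <= c * E.
Proof.
move=> k_gt0 K_ge0 M_ge0.
pose m := Num.min (k / 2) 1.
have m_gt0 : 0 < m by rewrite lt_min ltr01 divr_gt0.
have [mk m1] : m <= k / 2 /\ m <= 1 by rewrite /m !ge_min !lexx orbT.
have two_k : 0 < 2 / k by rewrite divr_gt0.
exists (2 / k + K + 1); split; first lra.
exists (Num.min 1 (m / (M + 1))); split; first by rewrite lt_min ltr01 divr_gt0 //; lra.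
move=> eps eps_gt0; rewrite lt_min => /andP[eps_lt1 eps_small] E P X E_ge0 kP PK XM.
have small : eps ^+ 2 * M <= m.
  move: eps_small; rewrite ltr_pdivlMr; last lra.
  have := ler_wpM2r M_ge0 (ltW eps_lt1); rewrite expr2; nra.
have XmE : `|eps ^+ 2 * X| <= m * E.
  rewrite normrM ger0_norm ?sqr_ge0 //; apply: (le_trans (ler_wpM2l (sqr_ge0 eps) XM)).
  by rewrite mulrA ler_wpM2r.
move: XmE; rewrite ler_norml => /andP[lo hi].
have inv_c : (2 / k + K + 1)^-1 <= k / 2.
  by rewrite -[k / 2]invf_div lef_pV2 ?posrE //; lra.
have := ler_wpM2l E_ge0 inv_c.
have := ler_wpM2r E_ge0 mk; have := ler_wpM2r E_ge0 m1; nra.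
Qed.
End RealInequalities.

Section ThetaPart.
Variables (R : realFieldType) (l1 alpha mu eta rho : R).
Hypotheses (l1_gt0 : 0 < l1) (alpha_gt0 : 0 < alpha) (mu_ge0 : 0 <= mu) (rho_gt0 : 0 < rho).
Hypothesis eta_large : eta ^+ 2 > mu / (alpha * l1).
Hypothesis rho_large : rho > 2 * mu * l1 / (alpha * eta ^+ 2 * l1 - mu).

(* [1 - s] is the midpoint of the interval
   (2 mu / (alpha rho eta^2), 2 l1 / (rho + 2 l1)), nonempty by [rho_large]. *)
Lemma theta_weight : exists s, [/\ 0 < s, s <= 1,
  2 * mu < alpha * rho * eta ^+ 2 * (1 - s) & rho * (1 - s) < 2 * s * l1].
Proof.
have al1_gt0 : 0 < alpha * l1 by rewrite mulr_gt0.
have eta2_gt0 : 0 < eta ^+ 2.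
  by apply: le_lt_trans eta_large; rewrite divr_ge0 // ltW.
have eta_ineq : mu < eta ^+ 2 * (alpha * l1) by rewrite -ltr_pdivrMr.
have den_gt0 : 0 < alpha * eta ^+ 2 * l1 - mu by lra.
have rho_ineq : 2 * mu * l1 < rho * (alpha * eta ^+ 2 * l1 - mu) by rewrite -ltr_pdivrMr.
have d_gt0 : 0 < alpha * rho * eta ^+ 2.
  by apply: mulr_gt0 => //; apply: mulr_gt0.
have W_gt0 : 0 < rho + 2 * l1 by rewrite addr_gt0 ?mulr_gt0.
pose lo := 2 * mu / (alpha * rho * eta ^+ 2); pose hi := 2 * l1 / (rho + 2 * l1).
have lo_ge0 : 0 <= lo by rewrite /lo; apply: divr_ge0; [apply: mulr_ge0 | apply: ltW].
have hi_lt1 : hi < 1 by rewrite /hi ltr_pdivrMr // mul1r ltrDr.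
have lo_lt_hi : lo < hi.
  by rewrite /lo /hi ltr_pdivrMr // mulrAC ltr_pdivlMr //; nra.
have [lo_sg sg_hi] : lo < (lo + hi) / 2 /\ (lo + hi) / 2 < hi by split; lra.
move: ((lo + hi) / 2) lo_sg sg_hi => sg lo_sg sg_hi.
exists (1 - sg); rewrite opprB addrCA subrr addr0; split; try lra.
  by rewrite [_ * sg]mulrC -ltr_pdivrMr.
by move: sg_hi; rewrite /hi ltr_pdivlMr //; nra.
Qed.

Lemma theta_part_lower : exists2 k, 0 < k & forall X Y Z c,
  0 <= X -> 0 <= Y -> l1 * Y <= Z -> c ^+ 2 <= X * Y ->
  k * (X + Z) <= - (mu / alpha * X) + Z + rho * (eta * c + eta ^+ 2 / 2 * X + 1 / 2 * Y).
Proof.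
have [s [s_gt0 s_le1 weightX weightZ]] := theta_weight.
pose kX := rho * eta ^+ 2 * (1 - s) / 2 - mu / alpha.
pose kY := rho * (1 - s) / (2 * s).
pose kZ := 1 - kY / l1.
have kX_gt0 : 0 < kX.
  rewrite subr_gt0 ltr_pdivrMr // mulrAC ltr_pdivlMr //; nra.
have kZ_gt0 : 0 < kZ.
  rewrite subr_gt0 ltr_pdivrMr // mul1r ltr_pdivrMr ?mulr_gt0 //; nra.
have kY_ge0 : 0 <= kY.
  by rewrite /kY divr_ge0 ?mulr_ge0 ?subr_ge0 ?ler0n ?(ltW rho_gt0) ?(ltW s_gt0).
exists (Num.min kX kZ); first by rewrite lt_min kX_gt0 kZ_gt0.
move=> X Y Z c X_ge0 Y_ge0 YZ cXY.
(* Young with weight [s] splits [rho eta c] between the [X] and [Y] terms;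
   the [Y] term is then absorbed by [Z] since [l1 Y <= Z]. *)
have young : 2 * - (eta * c) <= s * (eta ^+ 2 * X) + Y / s.
  apply: young_of_sqr_le => //; first by rewrite mulr_ge0 ?sqr_ge0.
  by rewrite sqrrN exprMn -mulrA ler_wpM2l ?sqr_ge0.
have kYZ : kY * Y <= kY / l1 * Z.
  have -> : kY * Y = kY / l1 * (l1 * Y) by field; rewrite gt_eqF.
  by apply: ler_wpM2l YZ; exact: divr_ge0 kY_ge0 (ltW l1_gt0).
have rest : 0 <= rho / 2 * (2 * (eta * c) + s * (eta ^+ 2 * X) + Y / s).
  by apply: mulr_ge0; [exact: divr_ge0 (ltW rho_gt0) (ler0n _ 2) | lra].
have -> : - (mu / alpha * X) + Z + rho * (eta * c + eta ^+ 2 / 2 * X + 1 / 2 * Y)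
    = kX * X + kZ * Z + (kY / l1 * Z - kY * Y)
      + rho / 2 * (2 * (eta * c) + s * (eta ^+ 2 * X) + Y / s).
  by rewrite /kX /kZ /kY; field; rewrite !gt_eqF.
have Z_ge0 : 0 <= Z := le_trans (mulr_ge0 (ltW l1_gt0) Y_ge0) YZ.
have minX : Num.min kX kZ * X <= kX * X by rewrite ler_wpM2r // ge_min lexx.
have minZ : Num.min kX kZ * Z <= kZ * Z by rewrite ler_wpM2r // ge_min lexx orbT.
lra.
Qed.

Lemma theta_part_upper X Y Z c :
  0 <= X -> 0 <= Y -> l1 * Y <= Z -> c ^+ 2 <= X * Y ->
  - (mu / alpha * X) + Z + rho * (eta * c + eta ^+ 2 / 2 * X + 1 / 2 * Y)
    <= (1 + rho * eta ^+ 2 + rho / l1) * (X + Z).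
Proof.
move=> X_ge0 Y_ge0 YZ cXY.
have young : 2 * (eta * c) <= 1 * (eta ^+ 2 * X) + Y / 1.
  apply: young_of_sqr_le => //; first by rewrite mulr_ge0 ?sqr_ge0.
  by rewrite exprMn -mulrA ler_wpM2l ?sqr_ge0.
rewrite mul1r divr1 in young.
have Y_le : Y <= Z / l1 by rewrite ler_pdivlMr // mulrC.
have rho_part : rho * (eta * c + eta ^+ 2 / 2 * X + 1 / 2 * Y) <= rho * (eta ^+ 2 * X + Z / l1).
  by rewrite ler_wpM2l ?(ltW rho_gt0) //; lra.
have Z_ge0 : 0 <= Z := le_trans (mulr_ge0 (ltW l1_gt0) Y_ge0) YZ.
have muX : 0 <= mu / alpha * X := mulr_ge0 (divr_ge0 mu_ge0 (ltW alpha_gt0)) X_ge0.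
have etaZ : 0 <= rho * eta ^+ 2 * Z := mulr_ge0 (mulr_ge0 (ltW rho_gt0) (sqr_ge0 eta)) Z_ge0.
have l1X : 0 <= rho / l1 * X := mulr_ge0 (divr_ge0 (ltW rho_gt0) (ltW l1_gt0)) X_ge0.
have -> : (1 + rho * eta ^+ 2 + rho / l1) * (X + Z)
  = X + Z + rho * (eta ^+ 2 * X + Z / l1) + rho * eta ^+ 2 * Z + rho / l1 * X by ring.
lra.
Qed.
End ThetaPart.

Section PreHilbert.
Variables (R : realType) (V : lmodType R) (ip : V -> V -> R).
Hypothesis ipC : forall x y, ip x y = ip y x.
Hypothesis ipL : forall (a : R) x y z, ip (a *: x + y) z = a * ip x z + ip y z.
Hypothesis ipP : forall x, 0 <= ip x x.

Lemma ip0l z : ip 0 z = 0.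
Proof. by have := ipL 1 0 0 z; rewrite scale1r addr0 mul1r; lra. Qed.

Lemma ipDl x y z : ip (x + y) z = ip x z + ip y z.
Proof. by have := ipL 1 x y z; rewrite scale1r mul1r. Qed.

Lemma ipZl a x z : ip (a *: x) z = a * ip x z.
Proof. by have := ipL a x 0 z; rewrite addr0 ip0l addr0. Qed.

Lemma ipNl x z : ip (- x) z = - ip x z.
Proof. by rewrite -scaleN1r ipZl mulN1r. Qed.

Lemma ip0r z : ip z 0 = 0.
Proof. by rewrite ipC ip0l. Qed.

Lemma ipDr x y z : ip z (x + y) = ip z x + ip z y.
Proof. by rewrite ipC ipDl !(ipC _ z). Qed.

Lemma ipZr a x z : ip z (a *: x) = a * ip z x.
Proof. by rewrite ipC ipZl ipC. Qed.

Lemma ipNr x z : ip z (- x) = - ip z x.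
Proof. by rewrite ipC ipNl ipC. Qed.

Lemma ip_expand k x y :
  ip (k *: x + y) (k *: x + y) = k ^+ 2 * ip x x + 2 * k * ip x y + ip y y.
Proof. by rewrite !(ipDl, ipDr, ipZl, ipZr) (ipC y x); ring. Qed.

Lemma ip_cauchy_schwarz x y : ip x y ^+ 2 <= ip x x * ip y y.
Proof.
rewrite mulrC; apply: quadratic_ge0_discr => // t.
by have := ipP (t *: x + y); rewrite ip_expand; lra.
Qed.

Lemma ip_abs_le x y : 2 * `|ip x y| <= ip x x + ip y y.
Proof.
have := ipP ((-1) *: x + y); have := ipP (1 *: x + y); rewrite !ip_expand.
by case: (ler0P (ip x y)) => _; lra.
Qed.

Lemma ipD_self_le x y : ip (x + y) (x + y) <= 2 * ip x x + 2 * ip y y.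
Proof.
have := ip_expand 1 x y; rewrite scale1r expr1n => ->.
have := ip_abs_le x y; have := ler_norm (ip x y); lra.
Qed.

Lemma hnorm_sqr x : hnorm ip x ^+ 2 = ip x x.
Proof. exact: sqr_sqrtr. Qed.

Lemma hnorm_le_ip x y C : hnorm ip x <= C * hnorm ip y -> ip x x <= C ^+ 2 * ip y y.
Proof.
move=> le_xy; rewrite -!hnorm_sqr -exprMn.
by rewrite ler_sqr ?nnegrE ?sqrtr_ge0 // (le_trans _ le_xy) ?sqrtr_ge0.
Qed.

Lemma Lfun_eps (DB : set V) (B : V -> V) alpha gamma mu eta rho eps u v w th :
  Lfun ip B DB alpha gamma mu eta rho eps u v w th
    = Lfun ip B DB alpha gamma mu eta rho 0 u v w th
      - eps ^+ 2 * ip (v - alpha *: u) (w + alpha *: v).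
Proof. by rewrite /Lfun expr0n /= mul0r subr0. Qed.

Lemma Efun_ge0 (B : V -> V) alpha u v w th : 0 <= Efun ip B alpha u v w th.
Proof. by apply: mulr_ge0; rewrite ?divr_ge0 ?addr_ge0 ?sqr_ge0. Qed.

Lemma selfadjoint_sym (D : set V) (T : V -> V) x y :
  selfadjoint ip D T -> D x -> D y -> ip (T x) y = ip x (T y).
Proof. by move=> [_ _ _ adj] Dx Dy; apply: (adj y (T y)).2. Qed.

Section SquareRoot.
Variables (D : set V) (A : V -> V) (DB : set V) (B : V -> V) (l1 : R).
Hypotheses (HA : selfadjoint ip D A) (A_pos : strictly_positive ip D A).
Hypotheses (A_spec : spectrum_min ip D A l1) (l1_gt0 : 0 < l1).
Hypothesis HB : is_sqrt_op ip D A DB B.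

Definition op_ge (t : R) := forall x, D x -> t * ip x x <= ip (A x) x.

Lemma op_ge0 : op_ge 0.
Proof.
move=> x Dx; rewrite mul0r; have [->|x_neq0] := eqVneq x 0; first by rewrite ip0r.
by apply/ltW/A_pos => //; apply/eqP.
Qed.

Lemma op_ge_le s t : t <= s -> op_ge s -> op_ge t.
Proof. by move=> ts As x Dx; apply: le_trans (As x Dx); rewrite ler_wpM2r. Qed.

Lemma op_ge_sup (E : set R) : E !=set0 -> (forall t, E t -> op_ge t) -> op_ge (sup E).
Proof.
move=> [t0 Et0] AE x Dx; have [x0|x_gt0] := eqVneq (ip x x) 0.
  by have := AE t0 Et0 x Dx; rewrite x0 !mulr0.
have {x_gt0}x_gt0 : 0 < ip x x by rewrite lt_def x_gt0 ipP.
rewrite -ler_pdivlMr //; apply: ge_sup; first by exists t0.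
by move=> t Et; rewrite ler_pdivlMr //; apply: AE.
Qed.

Lemma op_ge_cs s x y : op_ge s -> D x -> D y ->
  (ip (A x) y - s * ip x y) ^+ 2
    <= (ip (A y) y - s * ip y y) * (ip (A x) x - s * ip x x).
Proof.
have [[_ Dsub] Alin _ _] := HA.
move=> As Dx Dy; apply: quadratic_ge0_discr => [t|]; last by have := As x Dx; lra.
have := As _ (Dsub t x y Dx Dy); rewrite Alin // ip_expand //.
rewrite !(ipDl, ipZl) // !(ipDr, ipZr) // (selfadjoint_sym HA Dy Dx) (ipC y (A x)).
nra.
Qed.

(* If [(A - s) x2 = x], Cauchy-Schwarz for the nonnegative form
   [<(A - s) _, _>] gives [|x|^4 <= <x, x2> <(A - s) x, x>], while the bounded
   inverse gives [<x, x2> <= (C^2 + 1) |x|^2]. *)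
Lemma op_ge_coercive s : op_ge s -> resolvent ip D A s ->
  exists2 K, 0 < K & forall x, D x -> ip x x <= K * (ip (A x) x - s * ip x x).
Proof.
move=> As [A_surj [_ [C HC]]]; have C2_ge0 := sqr_ge0 C.
exists (C ^+ 2 + 1); first lra.
move=> x Dx; have [x2 [Dx2 Ax2]] := A_surj x.
have q_ge0 : 0 <= ip (A x) x - s * ip x x by rewrite subr_ge0 As.
have qx2 : ip (A x2) x2 - s * ip x2 x2 = ip x x2 by rewrite -Ax2 ipDl ipNl ipZl.
have qxx2 : ip (A x) x2 - s * ip x x2 = ip x x.
  by rewrite (selfadjoint_sym HA) // -ipZr -ipNr -ipDr Ax2.
have := op_ge_cs As Dx Dx2; rewrite qxx2 qx2 => cs_q.
have p_ge0 : 0 <= ip x x2 by rewrite -qx2 subr_ge0 As.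
have p_le : ip x x2 <= (C ^+ 2 + 1) * ip x x.
  have m_le : ip x2 x2 <= C ^+ 2 * ip x x by apply: hnorm_le_ip; rewrite -Ax2; apply: HC.
  rewrite -ler_sqr ?nnegrE ?mulr_ge0 //; last lra.
  apply: le_trans (ip_cauchy_schwarz x x2) _.
  have := ler_wpM2l (ipP x) m_le; have := ipP x; nra.
have [n0|n_gt0] := eqVneq (ip x x) 0; first by rewrite n0 in q_ge0 *; apply: mulr_ge0; lra.
have {}n_gt0 : 0 < ip x x by rewrite lt_def n_gt0 ipP.
rewrite -(ler_pM2l n_gt0) mulrCA; apply: le_trans cs_q _.
by rewrite mulrA ler_wpM2r.
Qed.

Lemma resolvent_lt_spectrum_min l : l < l1 -> resolvent ip D A l.
Proof. by move=> l_lt; apply: contrapT => /A_spec.2; rewrite leNgt l_lt. Qed.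

(* [sup E] is a lower bound of [A]; were it below [l1], it would lie in the
   resolvent set and [op_ge_coercive] would put a larger lower bound in [E]. *)
Lemma op_ge_spectrum_min : op_ge l1.
Proof.
pose E := [set t | t <= l1 /\ op_ge t].
have E0 : E 0 by split; [exact: ltW | exact: op_ge0].
have E_ub : ubound E l1 by move=> t [].
have As := op_ge_sup (ex_intro _ 0 E0) (fun t Et => Et.2).
apply: (op_ge_le _ As); rewrite leNgt; apply/negP => s_lt.
have [K K_gt0 coer] := op_ge_coercive As (resolvent_lt_spectrum_min s_lt).
pose d := Num.min K^-1 (l1 - sup E).
have d_gt0 : 0 < d by rewrite lt_min invr_gt0 K_gt0 subr_gt0.
have [d_le_K d_le_gap] : d <= K^-1 /\ d <= l1 - sup E by rewrite !ge_min !lexx orbT.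
have Ed : E (sup E + d).
  split; first lra.
  move=> x Dx; have := coer x Dx; rewrite -ler_pdivrMl // => le_q.
  have := ler_wpM2r (ipP x) d_le_K; nra.
have := ub_le_sup (ex_intro _ l1 E_ub) Ed; lra.
Qed.

Lemma sqrt_op_surj z : exists2 y, DB y & B y = z.
Proof.
have [A_onto _] := resolvent_lt_spectrum_min l1_gt0.
have [x [Dx Ax]] := A_onto z; have [_ _ DAB AB] := HB.
exists (B x); first by have [] := (DAB x).1 Dx.
by rewrite -AB // -Ax scale0r subr0.
Qed.

Lemma sqrt_op_poincare y : DB y -> l1 * ip y y <= ip (B y) (B y).
Proof.
move=> DBy; have [B_sa _ DAB AB] := HB; have [w DBw Bw] := sqrt_op_surj y.
have Dw : D w by apply/DAB; rewrite Bw.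
have -> : B y = A w by rewrite AB // Bw.
have -> : ip y y = ip (A w) w.
  have DBBw : DB (B w) by rewrite Bw.
  by rewrite -Bw (selfadjoint_sym B_sa) // -AB // ipC.
(* [l1 <A w, w>^2 <= l1 |w|^2 |A w|^2 <= <A w, w> |A w|^2] *)
have lw := op_ge_spectrum_min Dw; have cs := ip_cauchy_schwarz (A w) w.
have p_ge0 : 0 <= ip (A w) w by apply: le_trans lw; rewrite mulr_ge0 ?ipP ?ltW.
have [->|p_neq0] := eqVneq (ip (A w) w) 0; first by rewrite mulr0 ipP.
have p_gt0 : 0 < ip (A w) w by rewrite lt_def p_neq0 p_ge0.
rewrite -(ler_pM2r p_gt0); have := ipP (A w); have := l1_gt0; nra.
Qed.

Lemma normm1E th : exists y, [/\ DB y, B y = th & normm1 ip DB B th = hnorm ip y].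
Proof.
pose P := [set x | DB x /\ B x = th].
have [y DBy Byth] := sqrt_op_surj th.
have [] : P (xget 0 P) by apply: xgetPex; exists y.
by exists (xget 0 P).
Qed.

Section Energy.
Variables (alpha gamma mu eta rho : R).

Lemma cross_term_bound u v w th : DB u -> DB v ->
  `|ip (v - alpha *: u) (w + alpha *: v)| <= (8 / l1 + 1) * Efun ip B alpha u v w th.
Proof.
have [[[_ DBsub] _ _ _] _ _ _] := HB.
move=> DBu DBv; rewrite /Efun /norm1 !hnorm_sqr.
have DBvu : DB (v + alpha *: u) by rewrite addrC; apply: DBsub.
have diff_le : ip (v - alpha *: u) (v - alpha *: u)
    <= 8 * ip v v + 2 * ip (v + alpha *: u) (v + alpha *: u).
  have -> : v - alpha *: u = 2%:R *: v + - (v + alpha *: u).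
    by rewrite scaler_nat mulr2n opprD addrA addrK.
  apply: le_trans (ipD_self_le _ _) _.
  by rewrite ipZl ipZr ipNl ipNr opprK; lra.
have := ip_abs_le (v - alpha *: u) (w + alpha *: v).
have := sqrt_op_poincare DBv; have := sqrt_op_poincare DBvu.
have := ipP v; have := ipP (v + alpha *: u); have := ipP (w + alpha *: v); have := ipP th.
have := ipP (B v); have := ipP (B (v + alpha *: u)).
have il : 0 < l1^-1 by rewrite invr_gt0.
have l1K : l1 * l1^-1 = 1 by rewrite mulfV ?gt_eqF.
nra.
Qed.

Hypotheses (alpha_gt0 : 0 < alpha) (gamma_gt0 : 0 < gamma) (mu_ge0 : 0 <= mu).
Hypotheses (rho_gt0 : 0 < rho) (eta_large : eta ^+ 2 > mu / (alpha * l1)).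
Hypothesis rho_large : rho > 2 * mu * l1 / (alpha * eta ^+ 2 * l1 - mu).

Lemma principal_part_equiv : exists k K, [/\ 0 < k, 0 < K &
  forall u v w th, DB u -> DB v ->
    k * Efun ip B alpha u v w th <= Lfun ip B DB alpha gamma mu eta rho 0 u v w th /\
    Lfun ip B DB alpha gamma mu eta rho 0 u v w th <= K * Efun ip B alpha u v w th].
Proof.
have [k0 k0_gt0 theta_lower] :=
  theta_part_lower l1_gt0 alpha_gt0 mu_ge0 rho_gt0 eta_large rho_large.
have ga_gt0 : 0 < gamma / alpha by rewrite divr_gt0.
pose kap := Num.min (Num.min (gamma / alpha) 1) k0.
have kap_gt0 : 0 < kap by rewrite !lt_min ga_gt0 ltr01 k0_gt0.
have [[kap_ga kap_1] kap_k0] : (kap <= gamma / alpha /\ kap <= 1) /\ kap <= k0.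
  by rewrite !ge_min !lexx !orbT.
pose Kth := 1 + rho * eta ^+ 2 + rho / l1.
have Kth_gt0 : 0 < Kth.
  have := mulr_ge0 (ltW rho_gt0) (sqr_ge0 eta); have := divr_gt0 rho_gt0 l1_gt0.
  by rewrite /Kth; lra.
exists (2 * kap), (2 * (gamma / alpha + 1 + Kth)); split; [lra | lra |].
move=> u v w th DBu DBv; have [B_sa _ _ _] := HB.
have [y [DBy Byth normE]] := normm1E th.
have YZ : l1 * ip y y <= ip th th by rewrite -Byth; apply: sqrt_op_poincare.
have cXY : ip th v ^+ 2 <= ip (B v) (B v) * ip y y.
  by rewrite -Byth (selfadjoint_sym B_sa) // mulrC ip_cauchy_schwarz.
have := theta_lower _ _ _ _ (ipP _) (ipP _) YZ cXY.
have := theta_part_upper eta l1_gt0 alpha_gt0 mu_ge0 rho_gt0 (ipP _) (ipP _) YZ cXY.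
rewrite /Lfun /Efun /norm1 normE !hnorm_sqr expr0n /= mul0r subr0 -/Kth.
set a := ip (B (v + alpha *: u)) _; set b := ip (w + alpha *: v) _.
set X := ip (B v) (B v); set Z := ip th th.
have [a_ge0 b_ge0 X_ge0] : [/\ 0 <= a, 0 <= b & 0 <= X] by rewrite !ipP.
have Z_ge0 : 0 <= Z := le_trans (mulr_ge0 (ltW l1_gt0) (ipP y)) YZ.
have := ler_wpM2r a_ge0 kap_ga; have := ler_wpM2r b_ge0 kap_1.
have := ler_wpM2r (addr_ge0 X_ge0 Z_ge0) kap_k0.
have a_le : a <= a + b + X + Z by lra.
have XZ_le : X + Z <= a + b + X + Z by lra.
have := ler_wpM2l (ltW ga_gt0) a_le; have := ler_wpM2l (ltW Kth_gt0) XZ_le.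
lra.
Qed.
End Energy.
End SquareRoot.
End PreHilbert.

Theorem lemma7p5 (R : realType) (V : lmodType R) (ip : V -> V -> R)
  (D : set V) (A : V -> V) (DB : set V) (B : V -> V)
  (lambda1 alpha beta gamma eta rho : R) :
  is_real_hilbert ip ->
  selfadjoint ip D A ->
  strictly_positive ip D A ->
  spectrum_min ip D A lambda1 ->
  0 < lambda1 ->
  is_sqrt_op ip D A DB B ->
  0 < alpha -> 0 < beta -> 0 < gamma ->
  0 <= gamma - alpha * beta ->
  0 < rho ->
  eta ^+ 2 > (gamma - alpha * beta) / (alpha * lambda1) ->
  rho > 2 * (gamma - alpha * beta) * lambda1
          / (alpha * eta ^+ 2 * lambda1 - (gamma - alpha * beta)) ->
  exists c : R, 1 < c /\
    exists eps0 : R, 0 < eps0 /\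
      forall eps : R, 0 < eps -> eps < eps0 ->
        forall u v w th : V, DB u -> DB v ->
          Efun ip B alpha u v w th / c
            <= Lfun ip B DB alpha gamma (gamma - alpha * beta) eta rho eps u v w th /\
          Lfun ip B DB alpha gamma (gamma - alpha * beta) eta rho eps u v w th
            <= c * Efun ip B alpha u v w th.
Proof.
move=> [ipC ipL ipP _ _] HA A_pos A_spec l1_gt0 HB alpha_gt0 _ gamma_gt0 mu_ge0 rho_gt0
  eta_large rho_large.
have [k [K [k_gt0 K_gt0 principal]]] := principal_part_equiv ipC ipL ipP HA A_pos A_spec
  l1_gt0 HB alpha_gt0 gamma_gt0 mu_ge0 rho_gt0 eta_large rho_large.
have M_ge0 : 0 <= 8 / lambda1 + 1 by rewrite addr_ge0 ?divr_ge0 ?ltW.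
have [c [c_gt1 [eps0 [eps0_gt0 perturb]]]] := perturbation_equiv k_gt0 (ltW K_gt0) M_ge0.
exists c; split => //; exists eps0; split => // eps eps_gt0 eps_lt u v w th DBu DBv.
have [lower upper] := principal u v w th DBu DBv.
rewrite Lfun_eps; apply: perturb => //; first exact: Efun_ge0.
exact: (cross_term_bound ipC ipL ipP HA A_pos A_spec l1_gt0 HB).
Qed.
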